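(* For every $n \geq 1$, the number of permutations of $\{1,\ldots,n\}$ having exactly one fixed point equals $D_n$.
   Context: A linear arrangement of $\{1,\ldots,n\}$ is a sequence $a_1\cdots a_n$ in which each of $1,\ldots,n$ appears exactly once. It contains the pattern $ij$ if $a_t=i$ and $a_{t+1}=j$ for some $t$; otherwise it avoids it. $D_n$ is the number of linear arrangements of $\{1,\ldots,n\}$ avoiding all of the patterns $12, 23, \ldots, (n-1)n, n1$. *)

From mathcomp Require Import all_boot all_fingroup.
Set Implicit Arguments. Unset Strict Implicit. Unset Printing Implicit Defensive.

(* Elements of {1,...,n} are encoded as ordinals 'I_n, i.e. the value k
   represents the label k+1. *)

(* Cyclic successor on the labels: i |-> i+1 for i < n, and n |-> 1.
   In the 'I_n encoding this is ordS (k |-> (k+1) mod n). *)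
Definition cyc_succ n (i : 'I_n) : 'I_n := ordS i.

Definition linear_arrangement n (s : n.-tuple 'I_n) : bool := uniq s.

Definition contains_pattern n (s : seq 'I_n) (i j : 'I_n) : bool :=
  has (fun t => (nth i s t == i) && (nth i s t.+1 == j)) (iota 0 (size s).-1).

Definition avoids_cyclic n (s : seq 'I_n) : bool :=
  [forall i : 'I_n, ~~ contains_pattern s i (cyc_succ i)].

Definition D n : nat :=
  #|[set s : n.-tuple 'I_n | linear_arrangement s && avoids_cyclic s]|.

Definition nfix n (p : {perm 'I_n}) : nat := #|[set i : 'I_n | p i == i]|.

(* Both counts are evaluated by inclusion-exclusion over sets S of labels and
   agree term by term: each is sum_S (-1)^|S| [S <> all] (n - |S|)!.
   For arrangements, S is a set of labels i whose pattern i(i+1) is forced.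
   If S is proper, the forced pairs form paths of the n-cycle; gluing each pair
   into a block leaves n - |S| blocks to arrange freely, while S = {1..n}
   would force the whole cycle and no arrangement survives.  For permutations
   with a unique fixed point f, S is a set of further forced fixed points,
   leaving (n - |S| - 1)! permutations for each of the n - |S| choices of
   f outside S. *)

From mathcomp Require Import all_boot all_algebra all_fingroup.
From mathcomp Require Import zify.
Set Implicit Arguments. Unset Strict Implicit. Unset Printing Implicit Defensive.
Import GRing.Theory Num.Theory.

Section Adjacency.
Variable T : eqType.

Fixpoint adjacent (a b : T) (s : seq T) : bool :=
  if s is c :: s' then ((c == a) && (ohead s' == Some b)) || adjacent a b s'
  else false.

Lemma adjacent_mem a b s : adjacent a b s -> (a \in s) && (b \in s).
Proof.
elim: s => //= c s IH /orP [/andP [/eqP -> ]|/IH /andP [aS bS]].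
  by case: s {IH} => //= d s /eqP [->]; rewrite !inE !eqxx ?orbT.
by rewrite !inE aS bS ?orbT.
Qed.

Lemma adjacent_neq_last a b c s :
  uniq (c :: s) -> adjacent a b (c :: s) -> a != last c s.
Proof.
elim: s c => [|d s IH] c /=; first by rewrite orbF andbF.
move=> /andP [cnin /andP [dnin us]] /orP [/andP [/eqP <- /eqP [_]]|ad].
  by apply/eqP=> ceq; move: cnin; rewrite ceq mem_last.
by apply: IH; rewrite //= dnin.
Qed.

Lemma filter_predC1_id (y : T) s : y \notin s -> filter (predC1 y) s = s.
Proof.
by move=> ys; apply/all_filterP/allP => z zs /=; apply: contraNneq ys => <-.
Qed.

Definition adjacent_all (P : seq (T * T)) s := all (fun p => adjacent p.1 p.2 s) P.

Section Insertion.
Variables x y : T.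
Hypothesis xy : x != y.

Fixpoint insert_after (s : seq T) : seq T :=
  if s is c :: s' then
    if c == x then c :: y :: insert_after s' else c :: insert_after s'
  else [::].

Lemma insert_after_id s : x \notin s -> insert_after s = s.
Proof.
elim: s => //= c s IH; rewrite inE negb_or => /andP [cx /IH ->].
by rewrite eq_sym (negbTE cx).
Qed.

Lemma filter_insert_after s :
  filter (predC1 y) (insert_after s) = filter (predC1 y) s.
Proof.
elim: s => //= c s IH; case: ifP => /= [/eqP cx|_]; last by rewrite IH.
by rewrite eqxx /= IH cx xy.
Qed.

Lemma adjacent_insert_after a b s :
  a != x -> a != y -> b != y -> adjacent a b (insert_after s) = adjacent a b s.
Proof.
move=> ax ay bY; have ohead_ins t : ohead (insert_after t) = ohead t.
  by case: t => //= c t; case: ifP.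
elim: s => //= c s IH; case: ifP => /= [/eqP ->|_]; last by rewrite ohead_ins IH.
by rewrite !(eq_sym _ a) (negbTE ax) (negbTE ay) IH.
Qed.

Lemma adjacent_xy_insert_after s : adjacent x y (insert_after s) = (x \in s).
Proof.
elim: s => //= c s IH; case: ifP => /= [/eqP ->|cx].
  by rewrite !eqxx inE eqxx.
by rewrite cx IH inE (eq_sym x) cx.
Qed.

Lemma insert_after_filter s :
  uniq s -> adjacent x y s -> insert_after (filter (predC1 y) s) = s.
Proof.
elim: s => //= c s IH /andP [cs us].
case: (eqVneq c y) cs => [->|cy] cs.
  case/orP=> [/andP [/eqP yx _]|/adjacent_mem /andP [_ ys]].
    by move: xy; rewrite yx eqxx.
  by rewrite ys in cs.
rewrite /=; have [cx|cx] /= := eqVneq c x; last by move=> ad; rewrite IH.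
case: s cs us {IH} => [|d s] //=.
rewrite !inE negb_or => /andP [cd cs] /andP [ds us] /orP [/eqP [dy]|ad].
  by rewrite dy eqxx /= filter_predC1_id -?dy // insert_after_id -?cx.
case/orP: ad => [/andP [/eqP dx _]|/adjacent_mem /andP [xs _]].
  by rewrite dx cx eqxx in cd.
by rewrite cx xs in cs.
Qed.

Lemma perm_insert_after s : uniq s -> x \in s -> perm_eq (insert_after s) (y :: s).
Proof.
have swap (u v : T) w : perm_eq (u :: v :: w) (v :: u :: w).
  by apply/seq.permP => p /=; rewrite addnCA.
elim: s => //= c s IH /andP [cs us]; rewrite inE.
case: ifP => [/eqP cx|cx] /=.
  by rewrite insert_after_id -?cx // swap.
rewrite eq_sym cx /= => xs; apply: perm_trans (swap _ _ _).
by rewrite perm_cons IH.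
Qed.

Lemma count_adjacent_permutations U (Q : pred (seq T)) :
    uniq U -> x \in U -> y \in U -> (forall t, Q (insert_after t) = Q t) ->
  count (fun s => adjacent x y s && Q s) (permutations U) =
  count Q (permutations (filter (predC1 y) U)).
Proof.
move=> uU xU yU Qins; rewrite -!size_filter.
set A := filter _ (permutations U).
have memA s : s \in A -> [/\ uniq s, adjacent x y s, Q s & perm_eq s U].
  rewrite mem_filter mem_permutations => /andP [/andP [axy Qs] sU].
  by rewrite (perm_uniq sU).
rewrite -(size_map (filter (predC1 y))); apply/perm_size/uniq_perm.
- rewrite map_inj_in_uniq ?filter_uniq ?permutations_uniq //.
  move=> s1 s2 /memA [u1 a1 _ _] /memA [u2 a2 _ _] eq12.
  by rewrite -(insert_after_filter u1 a1) -(insert_after_filter u2 a2) eq12.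
- by rewrite filter_uniq // permutations_uniq.
move=> t; apply/mapP/idP => [[s /memA [us axy Qs sU] ->]|].
  rewrite mem_filter mem_permutations -Qins insert_after_filter //.
  by rewrite Qs perm_filter.
rewrite mem_filter mem_permutations => /andP [Qt tU].
have ut : uniq t by rewrite (perm_uniq tU) filter_uniq.
have xt : x \in t by rewrite (perm_mem tU) mem_filter /= xU andbT.
have yt : y \notin t by rewrite (perm_mem tU) mem_filter /= eqxx.
exists (insert_after t); last by rewrite filter_insert_after filter_predC1_id.
rewrite mem_filter mem_permutations adjacent_xy_insert_after xt Qins Qt /=.
apply: perm_trans (perm_insert_after ut xt) _.
rewrite perm_sym (perm_trans (perm_to_rem yU)) //.
by rewrite perm_cons rem_filter // perm_sym.
Qed.

End Insertion.

(* The rank certifies that the pairs of P form disjoint paths; sorting P by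
   decreasing rank makes its head pair end a path, so that pair can be glued
   first without disturbing the others. *)
Lemma count_adjacent_all_permutations (rank : T -> nat) (P : seq (T * T)) U :
    uniq U -> uniq (unzip1 P) -> uniq (unzip2 P) ->
    sorted (fun p q => rank q.1 <= rank p.1) P ->
    {in P, forall p, [/\ p.1 \in U, p.2 \in U & rank p.1 < rank p.2]} ->
  count (adjacent_all P) (permutations U) = (size U - size P)`!.
Proof.
elim: P U => [|[x y] P IH] U uU.
  by move=> *; rewrite subn0 -size_permutations // -count_predT; apply: eq_count.
rewrite /= => /andP [xP uP1] /andP [yP uP2] sortedP Pin.
have [xU yU rxy] := Pin (x, y) (mem_head _ _).
have {}Pin q : q \in P -> [/\ q.1 \in U, q.2 \in U & rank q.1 < rank q.2].
  by move=> qP; apply: Pin; rewrite inE qP orbT.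
have rankP : all (fun q => rank q.1 <= rank x) P.
  by apply: order_path_min sortedP => p q r /= pq qr; apply: leq_trans pq.
have fresh q : q \in P -> [&& q.1 != x, q.1 != y & q.2 != y].
  move=> qP; apply/and3P; split.
  - by apply: contraNneq xP => <-; apply: map_f.
  - by apply: contraTneq (allP rankP q qP) => ->; rewrite -ltnNge.
  - by apply: contraNneq yP => <-; apply: map_f.
rewrite (eq_count (a2 := fun s => adjacent x y s && adjacent_all P s)) //.
have xy : x != y by apply: contraTneq rxy => ->; rewrite ltnn.
rewrite count_adjacent_permutations //; last first.
  move=> t; apply: eq_in_all => q /fresh /and3P [q1x q1y q2y].
  exact: adjacent_insert_after.
rewrite IH ?filter_uniq ?(path_sorted sortedP) //.
  by rewrite -rem_filter // size_rem // subnS -!subn1 subnAC.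
move=> q qP; have [q1U q2U ->] := Pin q qP.
by case/and3P: (fresh q qP) => _ q1y q2y; rewrite !mem_filter /= q1y q2y q1U q2U.
Qed.

End Adjacency.

Section InclusionExclusion.
Local Open Scope ring_scope.
Variable I : finType.

Lemma sum_subset_sign (B : {set I}) :
  \sum_(S : {set I} | S \subset B) (-1) ^+ #|S| = (B == set0)%:R :> int.
Proof.
have [->|[a aB]] := set_0Vmem B.
  by rewrite eqxx (big_pred1 set0) ?cards0 // => S; rewrite /= subset0.
have /negbTE -> : B != set0 by apply/set0Pn; exists a.
pose toggle (S : {set I}) := if a \in S then S :\ a else a |: S.
have toggleK : involutive toggle.
  move=> S; rewrite /toggle; case: (boolP (a \in S)) => aS.
    by rewrite !inE eqxx /= setD1K.
  by rewrite setU11 setU1K.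
set s := \sum_(S | _) _; suff : s = - s by lia.
rewrite {1}/s (reindex_inj (inv_inj toggleK)) /s -sumrN /=.
apply: eq_big => S; rewrite /toggle; case: (boolP (a \in S)) => aS.
- apply/idP/idP => [SaB|SB]; last exact: subset_trans (subD1set S a) SB.
  by rewrite -(setD1K aS) subUset sub1set aB.
- by rewrite subUset sub1set aB.
- by rewrite [#|S|](cardsD1 a) aS exprS mulN1r opprK.
- by rewrite cardsU1 aS exprS mulN1r.
Qed.

Lemma card_set_sum (X : finType) (P : pred X) :
  #|[set x | P x]|%:R = \sum_x (P x)%:R :> int.
Proof.
rewrite cardsE -sum1_card natr_sum big_mkcond /=.
by apply: eq_bigr => x _; rewrite unfold_in; case: (P x).
Qed.

Lemma inclusion_exclusion (X : finType) (A : pred X) (E : I -> pred X) :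
  #|[set x | A x && [forall i, ~~ E i x]]|%:R =
  \sum_(S : {set I}) (-1) ^+ #|S| * #|[set x | A x && [forall i in S, E i x]]|%:R
  :> int.
Proof.
rewrite card_set_sum.
under [RHS]eq_bigr => S _ do rewrite card_set_sum mulr_sumr.
rewrite [RHS]exchange_big /=; apply: eq_bigr => x _.
pose B := [set i | E i x].
have allS (S : {set I}) : [forall i in S, E i x] = (S \subset B).
  by apply/forall_inP/subsetP => sub i /sub; rewrite inE.
have noneB : [forall i, ~~ E i x] = (B == set0).
  apply/forallP/eqP => [none|B0 i].
    by apply/setP => i; rewrite !inE (negbTE (none i)).
  by apply/negP => Eix; have := in_set0 i; rewrite -B0 inE Eix.
rewrite noneB; case: (A x) => /=; last by rewrite big1 // => S _; rewrite mulr0.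
rewrite -sum_subset_sign big_mkcond /=; apply: eq_bigr => S _.
by rewrite allS; case: (S \subset B); rewrite ?mulr1 ?mulr0.
Qed.

End InclusionExclusion.

Lemma card_perm_fixing (T : finType) (A : {set T}) :
  #|[set p : {perm T} | [forall i in A, p i == i]]| = (#|T| - #|A|)`!.
Proof.
have <- : #|~: A| = (#|T| - #|A|)%N by rewrite -(cardsC A) addKn.
rewrite -card_perm; apply: eq_card => p; rewrite inE.
apply/forall_inP/subsetP => [fixA i|onA i iA].
  by rewrite !inE; apply: contra => /fixA.
by apply: contraTT iA => /onA; rewrite inE.
Qed.

Lemma card_set1_eq (T : finType) (A : {set T}) :
  #|[set f | A == [set f]]| = (#|A| == 1%N).
Proof.
case: (boolP (#|A| == 1%N)) => [/cards1P [a ->]|A1].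
  rewrite [RHS]/= -(cards1 a); apply: eq_card => f.
  by rewrite !inE (inj_eq set1_inj) eq_sym.
apply/eqP; rewrite cards_eq0; apply/eqP/setP => f; rewrite !inE.
by apply: contraNF A1 => /eqP ->; rewrite cards1.
Qed.

Section OneFixpoint.
Variable T : finType.

Lemma card_perm_fixing_setU1 (f : T) (S : {set T}) :
  #|[set p : {perm T} | (p f == f) && [forall i in S, (i != f) && (p i == i)]]| =
  ((f \notin S) * (#|T| - #|S|.+1)`!)%N.
Proof.
case: (boolP (f \in S)) => [fS|fS] /=.
  apply/eqP; rewrite cards_eq0; apply/eqP/setP => p; rewrite !inE.
  by apply/negP => /andP [_ /forall_inP /(_ f fS)]; rewrite eqxx.
have -> : #|S|.+1 = #|f |: S| by rewrite cardsU1 fS.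
rewrite mul1n -card_perm_fixing; apply: eq_card => p; rewrite !inE.
apply/andP/forall_inP => [[pf /forall_inP fixS] i|fixfS].
  by rewrite !inE => /predU1P [->|/fixS /andP []].
split; first by apply: fixfS; rewrite setU11.
apply/forall_inP => i iS; rewrite fixfS ?setU1r // andbT.
by apply: contraNneq fS => <-.
Qed.

Lemma card_setC_mul_fact (S : {set T}) :
  (#|~: S| * (#|T| - #|S|.+1)`! = (S != setT) * (#|T| - #|S|)`!)%N.
Proof.
rewrite subnS; have -> : (#|T| - #|S|)%N = #|~: S| by rewrite -(cardsC S) addKn.
have -> : (S != setT) = (0 < #|~: S|)%N.
  by rewrite card_gt0 -setCT (inj_eq (can_inj setCK)).
by case: #|~: S| => [|m] //; rewrite mul1n factS.
Qed.

Local Open Scope ring_scope.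

Lemma card_perm_fixpoints_set1 (f : T) :
  #|[set p : {perm T} | [set i | p i == i] == [set f]]|%:R =
  \sum_(S : {set T}) (-1) ^+ #|S| * ((f \notin S) * (#|T| - #|S|.+1)`!)%:R :> int.
Proof.
under [RHS]eq_bigr => S _ do rewrite -card_perm_fixing_setU1.
rewrite -(inclusion_exclusion (fun p : {perm T} => p f == f)).
congr (_ %:R); apply: eq_card => p; rewrite !inE.
apply/eqP/andP => [fixp|[pf /forallP nofix]].
  have fixP i : (p i == i) = (i == f).
    by rewrite -[p i == i](in_set (fun i => p i == i)) fixp inE.
  by rewrite fixP eqxx; split=> //; apply/forallP => i; rewrite fixP andNb.
apply/setP => i; rewrite !inE; apply/idP/eqP => [pi|-> //].
by apply/eqP; move: (nofix i); rewrite pi andbT negbK.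
Qed.

Lemma card_perm_one_fixpoint :
  #|[set p : {perm T} | #|[set i | p i == i]| == 1%N]|%:R =
  \sum_(S : {set T}) (-1) ^+ #|S| * ((S != setT) * (#|T| - #|S|)`!)%:R :> int.
Proof.
have -> : #|[set p : {perm T} | #|[set i | p i == i]| == 1%N]|%:R =
          \sum_f #|[set p : {perm T} | [set i | p i == i] == [set f]]|%:R :> int.
  rewrite card_set_sum; under eq_bigr => p _ do rewrite -card_set1_eq card_set_sum.
  by rewrite exchange_big; apply: eq_bigr => f _; rewrite card_set_sum.
under eq_bigr => f _ do rewrite card_perm_fixpoints_set1.
rewrite exchange_big; apply: eq_bigr => S _; rewrite -mulr_sumr -card_setC_mul_fact.
under eq_bigr => f _ do rewrite natrM.
by rewrite -mulr_suml natrM -card_set_sum.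
Qed.

End OneFixpoint.

Lemma card_uniq_tuples (T : finType) n (Q : pred (seq T)) : #|T| = n ->
  #|[set s : n.-tuple T | uniq s && Q s]| = count Q (permutations (enum T)).
Proof.
move=> cardT; rewrite cardE -size_filter -(size_map val).
apply/perm_size/uniq_perm.
- by rewrite map_inj_uniq ?enum_uniq //; apply: val_inj.
- by rewrite filter_uniq // permutations_uniq.
move=> l; apply/mapP/idP => [[s]|].
  rewrite mem_enum inE => /andP [us Qs] ->.
  rewrite mem_filter Qs mem_permutations /=.
  have sizeT : size (enum T) = size s by rewrite size_tuple -cardT cardE.
  have [_ eq_s] := uniq_min_size us (fun x _ => mem_enum _ x) (eq_leq sizeT).
  exact: uniq_perm us (enum_uniq T) eq_s.
rewrite mem_filter mem_permutations => /andP [Ql lT].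
have sl : size l == n by rewrite (perm_size lT) -cardT cardE.
by exists (Tuple sl); rewrite // mem_enum inE /= (perm_uniq lT) enum_uniq Ql.
Qed.

Section CyclicArrangements.
Variable n : nat.

Lemma contains_pattern_adjacent (s : seq 'I_n) (i j : 'I_n) :
  contains_pattern s i j = adjacent i j s.
Proof.
rewrite /contains_pattern; elim: s => [|c s IH] //.
case: s IH => [|d s] IH; first by rewrite /= andbF.
have -> : adjacent i j [:: c, d & s] =
          ((c == i) && (d == j)) || adjacent i j (d :: s).
  by rewrite [LHS]/= (inj_eq Some_inj).
by rewrite -IH /= (iotaDl 1 0) has_map.
Qed.

Definition cyc_rank (j v : 'I_n) : nat :=
  if j < v then v - j.+1 else v + n - j.+1.

Lemma cyc_rank_ordS (j i : 'I_n) :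
  i != j -> cyc_rank j (ordS i) = (cyc_rank j i).+1.
Proof.
move=> /eqP ij; have {}ij : (i : nat) <> j by move=> /val_inj.
rewrite /cyc_rank /=; have := ltn_ord i; have := ltn_ord j.
case: (ltngtP i.+1 n) => h.
- by rewrite modn_small //; do ?[case: ifP => ?]; lia.
- by lia.
- by rewrite h modnn ltn0; do ?[case: ifP => ?]; lia.
Qed.

Hypothesis n_gt0 : 0 < n.

Lemma permutations_not_adjacent_cycle l :
  l \in permutations (enum 'I_n) -> ~~ [forall i, adjacent i (ordS i) l].
Proof.
rewrite mem_permutations => lI.
have ul : uniq l by rewrite (perm_uniq lI) enum_uniq.
case: l lI ul => [|c l] lI ul.
  by move/perm_size: lI; rewrite size_enum_ord => n0; move: n_gt0; rewrite -n0.
apply/forallPn; exists (last c l).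
by apply: contraL (adjacent_neq_last ul) _; rewrite eqxx.
Qed.

Lemma count_permutations_cyclic_adjacent (S : {set 'I_n}) :
  count (fun l => [forall i in S, adjacent i (ordS i) l])
        (permutations (enum 'I_n)) =
  (S != setT) * (n - #|S|)`!.
Proof.
have [->|ST] /= := eqVneq S setT.
  apply/eqP; rewrite -leqn0 leqNgt -has_count; apply/hasPn => l /=.
  move/permutations_not_adjacent_cycle; apply: contra => /forall_inP adjT.
  by apply/forallP => i; apply: adjT; rewrite in_setT.
have /set0Pn [j] : ~: S != set0 by rewrite -setCT (inj_eq (can_inj setCK)).
rewrite inE => jS.
pose rank := cyc_rank j.
pose P := sort (fun p q => rank q.1 <= rank p.1) [seq (i, ordS i) | i <- enum S].
have PS : perm_eq P [seq (i, ordS i) | i <- enum S] by rewrite perm_sort.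
rewrite mul1n (eq_count (a2 := adjacent_all P)); last first.
  move=> l; rewrite /adjacent_all (perm_all _ PS) all_map.
  by apply/forall_inP/allP => adjS i; have := adjS i; rewrite mem_enum.
rewrite (count_adjacent_all_permutations (rank := rank)) ?enum_uniq //.
- by rewrite size_enum_ord (perm_size PS) size_map cardE.
- by rewrite (perm_uniq (perm_map _ PS)) -map_comp map_id_in ?enum_uniq.
- rewrite (perm_uniq (perm_map _ PS)) -map_comp.
  by rewrite (map_inj_uniq (@ordS_inj n)) enum_uniq.
- by apply: sort_sorted => p q; apply: leq_total.
move=> p; rewrite (perm_mem PS) => /mapP [i iS ->] /=.
have ij : i != j by apply: contraNneq jS => <-; rewrite -mem_enum.
by rewrite /rank cyc_rank_ordS // !mem_enum.
Qed.

Local Open Scope ring_scope.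

Lemma D_inclusion_exclusion :
  (D n)%:R =
  \sum_(S : {set 'I_n}) (-1) ^+ #|S| * ((S != setT) * (n - #|S|)`!)%:R :> int.
Proof.
rewrite /D /linear_arrangement /avoids_cyclic.
rewrite (inclusion_exclusion (fun s : n.-tuple 'I_n => uniq s)).
apply: eq_bigr => S _; rewrite -count_permutations_cyclic_adjacent.
rewrite -(card_uniq_tuples _ (card_ord n)); congr (_ * _%:R); apply: eq_card => s.
by rewrite !inE; under eq_forallb => i do rewrite contains_pattern_adjacent.
Qed.

End CyclicArrangements.

Theorem proposition6p1 (n : nat) (hn : 1 <= n) :
  #|[set p : {perm 'I_n} | nfix p == 1]| = D n.
Proof.
apply/eqP; rewrite -(eqr_nat int) D_inclusion_exclusion //.
by have := card_perm_one_fixpoint 'I_n; rewrite card_ord => <-.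
Qed.
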